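(* Suppose given a pullback square of topological spaces with $C=A\times_BD$, maps $C\to A$, $r\colon C\to D$, $l\colon A\to B$ and $b\colon D\to B$, in which $r$ and $b$ are Serre fibrations and $b$ is surjective. Then $l$ is a Serre fibration. *)

From HB Require Import structures.
From mathcomp Require Import all_boot all_order all_algebra.
From mathcomp Require Import all_classical all_reals all_analysis.
From mathcomp Require Import Rstruct Rstruct_topology.
From Stdlib Require Rdefinitions.
Set Implicit Arguments. Unset Strict Implicit. Unset Printing Implicit Defensive.
Import Order.TTheory GRing.Theory Num.Theory.
Local Open Scope classical_set_scope.
Local Open Scope ring_scope.

Notation RR := Rdefinitions.R.

Definition unit_cube (n : nat) : set 'rV[RR]_n :=
  [set x | forall i : 'I_n, 0 <= x ord0 i <= 1].
Arguments unit_cube : clear implicits.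

Definition cube_cyl (n : nat) : set ('rV[RR]_n * RR)%type :=
  setX (unit_cube n) (`[0, 1]%classic : set RR).
Arguments cube_cyl : clear implicits.

Definition serre_fibration (E X : topologicalType) (p : E -> X) : Prop :=
  continuous p /\
  forall (n : nat) (f : 'rV[RR]_n -> E) (H : ('rV[RR]_n * RR)%type -> X),
    {within unit_cube n, continuous f} ->
    {within cube_cyl n, continuous H} ->
    (forall x, unit_cube n x -> H (x, 0) = p (f x)) ->
    exists G : ('rV[RR]_n * RR)%type -> E,
      [/\ {within cube_cyl n, continuous G},
          (forall x, unit_cube n x -> G (x, 0) = f x) &
          (forall y, cube_cyl n y -> p (G y) = H y)].

(* C, with maps c : C -> A and r : C -> D, is the (topological) pullback
   A x_B D of l : A -> B and b : D -> B: the square commutes, c and r are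
   continuous, and the induced map C -> A x D is a homeomorphism onto the
   fibre product subspace {(a,d) | l a = b d} of A x D (product topology). *)
Definition is_pullback (A B C D : topologicalType)
  (c : C -> A) (r : C -> D) (l : A -> B) (b : D -> B) : Prop :=
  let g := fun z : C => (c z, r z) in
  [/\ continuous c, continuous r, continuous l & continuous b] /\
  [/\ (forall z, l (c z) = b (r z)),
      injective g,
      (forall a d, l a = b d -> exists z, g z = (a, d)) &
      (forall U : set C, open U -> exists V : set (A * D)%type, open V /\ U = g @^-1` V)].

(* Every map u from a cube lifts through a Serre fibration once u 0 is
   lifted, since the cube contracts to 0.  So given a homotopy
   H : I^n x I -> B starting at l o f, first lift l o f through b (b is
   surjective) to g : I^n -> D, then lift H through b to G starting at g.
   The pair (f, g) defines a map I^n -> C = A x_B D, the homotopy G lifts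
   through r starting at it, and composing the result with C -> A gives the
   required lift of H. *)
From HB Require Import structures.
From mathcomp Require Import all_boot all_order all_algebra.
From mathcomp Require Import all_classical all_reals all_analysis.
From mathcomp Require Import Rstruct Rstruct_topology.
Import Order.TTheory GRing.Theory Num.Theory.
Local Open Scope classical_set_scope.
Local Open Scope ring_scope.

Lemma within_continuous_compS {X Y Z : topologicalType} {P : set X} (Q : set Y)
    {phi : X -> Y} {F : Y -> Z} :
  {within P, continuous phi} -> set_fun P Q phi ->
  {within Q, continuous F} -> {within P, continuous (F \o phi)}.
Proof.
move=> /subspace_continuousP phi_cont PQ /subspace_continuousP F_cont.
apply/subspace_continuousP => x Px.
apply: (cvg_comp _ _ _ (F_cont _ (PQ _ Px))) => U /= U_nbhs.
have := phi_cont x Px _ U_nbhs; rewrite /= !nbhs_simpl /within /=.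
by apply: filterS => y /= phiU Py; exact: phiU Py (PQ _ Py).
Qed.

Lemma within_continuous_pair {X Y Z : topologicalType} {P : set X}
    {f : X -> Y} {g : X -> Z} :
  {within P, continuous f} -> {within P, continuous g} ->
  {within P, continuous (fun x => (f x, g x))}.
Proof.
move=> /subspace_continuousP f_cont /subspace_continuousP g_cont.
by apply/subspace_continuousP => x Px; exact: cvg_pair (f_cont x Px) (g_cont x Px).
Qed.

Definition induces_topology {Y Z : topologicalType} (m : Y -> Z) : Prop :=
  forall U : set Y, open U -> exists V : set Z, open V /\ U = m @^-1` V.

Lemma within_continuous_induced {X Y Z : topologicalType} {m : Y -> Z}
    {P : set X} {z : X -> Y} :
  induces_topology m -> {within P, continuous (m \o z)} ->
  {within P, continuous z}.
Proof.
move=> m_ind /subspace_continuousP mz_cont.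
apply/subspace_continuousP => x Px U.
rewrite nbhsE => -[U' [U'_open U'zx] U'U].
have [V [V_open U'E]] := m_ind U' U'_open.
have Vmzx : V (m (z x)) by rewrite U'E in U'zx.
have := mz_cont x Px V (open_nbhs_nbhs (conj V_open Vmzx)).
rewrite /= !nbhs_simpl /within /=.
by apply: filterS => y /= Vmzy Py; apply: U'U; rewrite U'E; exact: Vmzy.
Qed.

Lemma pullback_within_factor {A B C D X : topologicalType}
    {c : C -> A} {r : C -> D} {l : A -> B} {b : D -> B}
    {P : set X} {x0 : X} {f : X -> A} {g : X -> D} :
  is_pullback c r l b -> P x0 ->
  {within P, continuous f} -> {within P, continuous g} ->
  (forall x, P x -> l (f x) = b (g x)) ->
  exists z : X -> C, [/\ {within P, continuous z},
    (forall x, P x -> c (z x) = f x) & (forall x, P x -> r (z x) = g x)].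
Proof.
move=> [_ [_ _ fibre_pt cr_ind]] Px0 f_cont g_cont lf_bg.
(* [P x0] supplies a point of [C], used as the value of [z] off [P]. *)
have [z0 _] := fibre_pt _ _ (lf_bg x0 Px0).
have [z z_fibre] : {z : X -> C & forall x, P x -> (c (z x), r (z x)) = (f x, g x)}.
  apply: (@choice _ _ (fun x w => P x -> (c w, r w) = (f x, g x))) => x.
  have [Px|notPx] := pselect (P x); last by exists z0.
  by have [w w_fibre] := fibre_pt _ _ (lf_bg x Px); exists w.
exists z; split.
- apply: (within_continuous_induced cr_ind).
  apply: (subspace_eq_continuous _ (within_continuous_pair f_cont g_cont)).
  by move=> x /set_mem Px; rewrite /from_subspace /= z_fibre.
- by move=> x Px; case: (z_fibre x Px).
- by move=> x Px; case: (z_fibre x Px).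
Qed.

Lemma unit_cube0 n : unit_cube n 0.
Proof. by move=> i; rewrite mxE lexx ler01. Qed.

Lemma cube_cylP n x (t : RR) : cube_cyl n (x, t) <-> unit_cube n x /\ 0 <= t <= 1.
Proof. by rewrite /cube_cyl /= in_itv. Qed.

Lemma cube_cyl_top n : set_fun (unit_cube n) (cube_cyl n) (fun x => (x, 1)).
Proof. by move=> x x_cube; apply/cube_cylP; rewrite ler01 lexx. Qed.

Lemma continuous_cube_cyl_top n : continuous (fun x : 'rV[RR]_n => (x, 1 : RR)).
Proof. by move=> x; exact: cvg_pair (@cvg_id _ (nbhs x)) (cvg_cst (1 : RR)). Qed.

Definition cube_contraction n (y : 'rV[RR]_n * RR) : 'rV[RR]_n := y.2 *: y.1.

Lemma cube_contraction_cyl n : set_fun (cube_cyl n) (unit_cube n) (@cube_contraction n).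
Proof.
move=> [x t] /cube_cylP[x_cube /andP[t_ge0 t_le1]] i; rewrite mxE.
by have /andP[x_ge0 x_le1] := x_cube i; rewrite mulr_ge0 //= mulr_ile1.
Qed.

Lemma continuous_cube_contraction n : continuous (@cube_contraction n).
Proof. by move=> y; apply: continuousZ; [exact: cvg_snd | exact: cvg_fst]. Qed.

Lemma serre_fibration_lift_cube {E X : topologicalType} {p : E -> X} {n : nat}
    {u : 'rV[RR]_n -> X} (e0 : E) :
  serre_fibration p -> {within unit_cube n, continuous u} -> p e0 = u 0 ->
  exists2 g : 'rV[RR]_n -> E, {within unit_cube n, continuous g} &
    forall x, unit_cube n x -> p (g x) = u x.
Proof.
move=> [_ lift_p] u_cont pe0.
have K_cont : {within cube_cyl n, continuous (u \o @cube_contraction n)}.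
  exact: within_continuous_compS (continuous_subspaceT (continuous_cube_contraction n))
    (@cube_contraction_cyl n) u_cont.
have K0 x : unit_cube n x -> (u \o @cube_contraction n) (x, 0) = p e0.
  by rewrite /= /cube_contraction /= scale0r pe0.
have [G [G_cont _ pG]] :=
  lift_p n (fun=> e0) _ (continuous_subspaceT (@cst_continuous _ _ e0)) K_cont K0.
exists (G \o fun x => (x, 1)).
  exact: within_continuous_compS (continuous_subspaceT (continuous_cube_cyl_top n))
    (@cube_cyl_top n) G_cont.
move=> x x_cube; rewrite /= pG; last exact: cube_cyl_top.
by rewrite /= /cube_contraction /= scale1r.
Qed.

Theorem lemma4p18 (A B C D : topologicalType)
  (c : C -> A) (r : C -> D) (l : A -> B) (b : D -> B) :
  is_pullback c r l b ->
  serre_fibration r -> serre_fibration b -> (forall y : B, exists x : D, b x = y) ->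
  serre_fibration l.
Proof.
move=> pb r_fib b_fib b_surj; have [[c_cont _ l_cont _] [lc_br _ _ _]] := pb.
split=> // n f H f_cont H_cont H0.
have [d0 bd0] := b_surj (l (f 0)).
have [g g_cont bg] := serre_fibration_lift_cube d0 b_fib
  (within_continuous_comp _ _ _ (in1W l_cont) f_cont) bd0.
have [G [G_cont G0 bG]] := b_fib.2 n g H g_cont H_cont
  (fun x x_cube => etrans (H0 x x_cube) (esym (bg x x_cube))).
have [z [z_cont cz rz]] := pullback_within_factor pb (unit_cube0 n) f_cont g_cont
  (fun x x_cube => esym (bg x x_cube)).
have [G' [G'_cont G'0 rG']] := r_fib.2 n z G z_cont G_cont
  (fun x x_cube => etrans (G0 x x_cube) (esym (rz x x_cube))).
exists (c \o G'); split.
- exact: within_continuous_comp _ _ _ (in1W c_cont) G'_cont.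
- by move=> x x_cube /=; rewrite G'0 // cz.
- by move=> y y_cyl /=; rewrite lc_br rG' // bG.
Qed.
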